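(* Let $A\in\mathbb{R}^{N\times N}$ be symmetric positive definite, $b\in\mathbb{R}^N$, $x_0\in\mathbb{R}^N$ with $r_0=b-Ax_0\neq0$, and let $n$ be the grade of $r_0$ with respect to $A$. Run the conjugate gradient method (exact arithmetic): $p_0=r_0$ and, for $k=1,2,\dots$, $$\gamma_{k-1}=\frac{r_{k-1}^Tr_{k-1}}{p_{k-1}^TAp_{k-1}},\quad x_k=x_{k-1}+\gamma_{k-1}p_{k-1},\quad r_k=r_{k-1}-\gamma_{k-1}Ap_{k-1},\quad \delta_k=\frac{r_k^Tr_k}{r_{k-1}^Tr_{k-1}},\quad p_k=r_k+\delta_kp_{k-1}.$$ For $1\le k\le n$ let $L_k^T$ be the $k\times k$ upper bidiagonal matrix with diagonal entries $1/\sqrt{\gamma_{j-1}}$, $j=1,\dots,k$, and superdiagonal entries $\sqrt{\delta_j/\gamma_{j-1}}$, $j=1,\dots,k-1$, let $T_k=L_kL_k^T$, and define $\xi_k=\|r_0\|^2e_1^TT_k^{-2}e_1$ (with $e_1$ the first column of the $k\times k$ identity), and $\xi_0=0$. Let $\psi_i=\gamma_i\|r_i\|^2$, and let $\phi_0=1$, $\phi_k=\phi_{k-1}/(\phi_{k-1}+\delta_k)$ for $k\ge1$. Then $$\xi_k=\sum_{j=0}^{k-1}\|r_j\|^{-2}\Big(\sum_{i=j}^{k-1}\psi_i\Big)^2,$$ and $\xi_{k+1}$, $k=0,1,2,\dots$ (with $k+1\le n$), can be computed by the recurrences $$\vartheta_{k+1}=\vartheta_k+\gamma_k\phi_k^{-1},\qquad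 \xi_{k+1}=\xi_k+\psi_k(\vartheta_{k+1}+\vartheta_k),$$ where $\vartheta_0=0$ and $\xi_0=0$.
   Context: $\|\cdot\|$ is the Euclidean norm. The grade $n$ of $r_0$ with respect to $A$ is the maximal dimension of the Krylov subspaces $\mathrm{span}\{r_0,Ar_0,\dots,A^{k-1}r_0\}$; for $k\le n$ all CG quantities above are well defined and $\gamma_{k-1}>0$. $T_k$ coincides with the Jacobi matrix of Lanczos recurrence coefficients generated by $A$ and $r_0/\|r_0\|$. *)

From HB Require Import structures.
From mathcomp Require Import all_boot all_order all_algebra.
Set Implicit Arguments. Unset Strict Implicit. Unset Printing Implicit Defensive.
Import Order.TTheory GRing.Theory Num.Theory.
Local Open Scope ring_scope.

Section CG.
Variables (R : rcfType) (N : nat).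
Implicit Types (u v : 'cV[R]_N) (A : 'M[R]_N).

Definition dotv u v : R := (u^T *m v) ord0 ord0.

Definition spd A : Prop :=
  A^T = A /\ forall v : 'cV[R]_N, v != 0 -> 0 < dotv v (A *m v).

(* Krylov matrix: rows are (A^i r0)^T, i < k; its rank is dim span{r0,...,A^(k-1) r0} *)
Definition krylov A (r0 : 'cV[R]_N) (k : nat) : 'M[R]_(k, N) :=
  \matrix_(i < k) (A ^+ i *m r0)^T.

Definition is_grade A (r0 : 'cV[R]_N) (n : nat) : Prop :=
  (exists k, \rank (krylov A r0 k) = n) /\ (forall k, (\rank (krylov A r0 k) <= n)%N).

Variables (A : 'M[R]_N) (b x0 : 'cV[R]_N).

Definition r0 : 'cV[R]_N := b - A *m x0.

Fixpoint cg_state (k : nat) : 'cV[R]_N * 'cV[R]_N * 'cV[R]_N :=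
  match k with
  | 0 => (x0, r0, r0)
  | k'.+1 =>
    let: (x, r, p) := cg_state k' in
    let g := dotv r r / dotv p (A *m p) in
    let x' := x + g *: p in
    let r' := r - g *: (A *m p) in
    let d := dotv r' r' / dotv r r in
    (x', r', r' + d *: p)
  end.

Definition cg_x k := (cg_state k).1.1.
Definition cg_r k := (cg_state k).1.2.
Definition cg_p k := (cg_state k).2.

Definition gamma k : R := dotv (cg_r k) (cg_r k) / dotv (cg_p k) (A *m cg_p k).
(* delta_k = r_k^T r_k / r_{k-1}^T r_{k-1}, used only for k >= 1 *)
Definition delta k : R := dotv (cg_r k) (cg_r k) / dotv (cg_r k.-1) (cg_r k.-1).

(* L_k^T : k x k upper bidiagonal; 0-indexed row i: diagonal 1/sqrt(gamma_i),
   superdiagonal (i, i+1): sqrt(delta_{i+1}/gamma_i) *)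
Definition LkT (k : nat) : 'M[R]_k :=
  \matrix_(i < k, j < k)
    (if (j : nat) == i then 1 / Num.sqrt (gamma i)
     else if (j : nat) == i.+1 then Num.sqrt (delta i.+1 / gamma i) else 0).

Definition Tk (k : nat) : 'M[R]_k := (LkT k)^T *m LkT k.

Definition xi (k : nat) : R :=
  match k with
  | 0 => 0
  | k'.+1 => dotv r0 r0 * (invmx (Tk k'.+1) *m invmx (Tk k'.+1)) ord0 ord0
  end.

Definition psi i : R := gamma i * dotv (cg_r i) (cg_r i).

Fixpoint phi (k : nat) : R :=
  match k with
  | 0 => 1
  | k'.+1 => phi k' / (phi k' + delta k'.+1)
  end.

Fixpoint vartheta (k : nat) : R :=
  match k with
  | 0 => 0
  | k'.+1 => vartheta k' + gamma k' / phi k'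
  end.

End CG.

(* T_k = L_k L_k^T with L_k^T upper bidiagonal, so T_k^{-1} e_1 is found by two
   bidiagonal solves.  With s_j = psi_j + ... + psi_{k-1}, the vector
   z_i = (-1)^i sqrt(psi_i) / ||r_0|| solves L_k z = e_1 and
   y_j = (-1)^j s_j / (||r_j|| ||r_0||) solves L_k^T y = z; hence
   ||r_0||^2 e_1^T T_k^{-2} e_1 = ||r_0||^2 ||y||^2 = sum_j s_j^2 / ||r_j||^2.
   Passing from k to k+1 adds psi_k to every s_j, which gives the recurrence
   for xi with vartheta_k = sum_j s_j / ||r_j||^2; the recurrence for vartheta
   follows from phi_k^{-1} = ||r_k||^2 sum_{j <= k} ||r_j||^{-2}.
   All the quotients are legitimate below the grade: r_k and p_k are congruent
   to (prod_{i<k} -gamma_i) A^k r_0 modulo the k-th Krylov space, which does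
   not contain A^k r_0, so r_k, p_k <> 0 and gamma_k > 0 by induction. *)

From HB Require Import structures.
From mathcomp Require Import all_boot all_order all_algebra.
From mathcomp Require Import ring.
Set Implicit Arguments. Unset Strict Implicit. Unset Printing Implicit Defensive.
Import Order.TTheory GRing.Theory Num.Theory.
Local Open Scope ring_scope.

Section TailSums.
Variables (R : fieldType) (w c : nat -> R).

Definition tail_sum k j := \sum_(j <= i < k) w i.
Definition tail_series k := \sum_(0 <= j < k) (c j)^-1 * tail_sum k j.
Definition sq_tail_series k := \sum_(0 <= j < k) (c j)^-1 * tail_sum k j ^+ 2.
Definition inv_prefix_sum k := \sum_(0 <= j < k.+1) (c j)^-1.

Lemma tail_sum_geq k j : (k <= j)%N -> tail_sum k j = 0.
Proof. exact: big_geq. Qed.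

Lemma tail_sum_recl k j : (j < k)%N -> tail_sum k j = w j + tail_sum k j.+1.
Proof. exact: big_ltn. Qed.

Lemma tail_sum_recr k j : (j <= k)%N -> tail_sum k.+1 j = tail_sum k j + w k.
Proof. exact: big_nat_recr. Qed.

Lemma inv_prefix_sumS k : inv_prefix_sum k.+1 = inv_prefix_sum k + (c k.+1)^-1.
Proof. exact: big_nat_recr. Qed.

Lemma sum_tail_sum_extend (F : R -> R) k : F 0 = 0 ->
  \sum_(0 <= j < k) (c j)^-1 * F (tail_sum k j) =
  \sum_(0 <= j < k.+1) (c j)^-1 * F (tail_sum k j).
Proof. by move=> F0; rewrite big_nat_recr //= tail_sum_geq // F0 mulr0 addr0. Qed.

Lemma sum_tail_sumS (F : R -> R) k :
  \sum_(0 <= j < k.+1) (c j)^-1 * F (tail_sum k.+1 j) =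
  \sum_(0 <= j < k.+1) (c j)^-1 * F (tail_sum k j + w k).
Proof. by apply: eq_big_nat => j /andP[_ le_jk]; rewrite tail_sum_recr. Qed.

Lemma tail_seriesS k : tail_series k.+1 = tail_series k + w k * inv_prefix_sum k.
Proof.
rewrite /tail_series (sum_tail_sumS id) (sum_tail_sum_extend (F := id)) //.
by rewrite /inv_prefix_sum mulr_sumr -big_split; apply: eq_bigr => j _ /=; ring.
Qed.

Lemma sq_tail_seriesS k :
  sq_tail_series k.+1 = sq_tail_series k + w k * (tail_series k.+1 + tail_series k).
Proof.
rewrite /sq_tail_series /tail_series (sum_tail_sumS (fun x => x ^+ 2)) (sum_tail_sumS id).
rewrite (sum_tail_sum_extend (F := fun x => x ^+ 2)) ?expr0n //.
rewrite (sum_tail_sum_extend (F := id)) //.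
by rewrite -big_split mulr_sumr -big_split; apply: eq_bigr => j _ /=; ring.
Qed.

End TailSums.

Section UpperBidiagonal.
Variables (R : comPzRingType) (m : nat) (d e : nat -> R).

Definition upper_bidiag : 'M[R]_m :=
  \matrix_(i, j) (if (j : nat) == i then d i else if (j : nat) == i.+1 then e i else 0).

Lemma upper_bidiag_mul_col (f : nat -> R) :
  upper_bidiag *m \col_(j < m) f j =
  \col_(i < m) (d i * f i + (if (i.+1 < m)%N then e i * f i.+1 else 0)).
Proof.
apply/colP => i; rewrite !mxE.
have split_term (j : 'I_m) :
    upper_bidiag i j * (\col_(j < m) f j) j 0 =
    (if (j : nat) == i then d i * f j else 0) +
    (if (j : nat) == i.+1 then e i * f j else 0).
  rewrite !mxE; have [->|_] := eqVneq (j : nat) i; last by case: ifP; rewrite ?mul0r ?add0r.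
  by rewrite (ltn_eqF (ltnSn i)) addr0.
rewrite (eq_bigr _ (fun j _ => split_term j)) big_split -!big_mkcond /=.
by rewrite !(big_ord1_eq _ (fun j : nat => _ * f j)) ltn_ord.
Qed.

Lemma tr_upper_bidiag_mul_col (f : nat -> R) :
  upper_bidiag^T *m \col_(j < m) f j =
  \col_(i < m) (d i * f i + (if (0 < i)%N then e i.-1 * f i.-1 else 0)).
Proof.
apply/colP => i; rewrite !mxE.
have split_term (j : 'I_m) :
    upper_bidiag^T i j * (\col_(j < m) f j) j 0 =
    (if (j : nat) == i then d i * f i else 0) +
    (if (j : nat) == i.-1 then (if (0 < i)%N then e j * f j else 0) else 0).
  rewrite !mxE; have [-> |ne] := eqVneq (j : nat) i.
    by case: (i : nat) => [|i'] //=; rewrite ?(gtn_eqF (ltnSn i')) addr0.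
  rewrite add0r; case: (i : nat) => [|i'] /=; first by rewrite mul0r if_same.
  by rewrite eqSS eq_sym; case: eqP; rewrite ?mul0r.
rewrite (eq_bigr _ (fun j _ => split_term j)) big_split -!big_mkcond /=.
rewrite (big_ord1_eq _ (fun _ => d i * f i)).
rewrite (big_ord1_eq _ (fun j : nat => if (0 < i)%N then e j * f j else 0)).
by rewrite ltn_ord (leq_ltn_trans (leq_pred i) (ltn_ord i)); case: (i : nat).
Qed.

Lemma det_upper_bidiag : \det upper_bidiag = \prod_(i < m) d i.
Proof.
rewrite -det_tr det_trig; last first.
  apply/is_trig_mxP => i j lt_ij; rewrite !mxE.
  by rewrite (ltn_eqF lt_ij) (ltn_eqF (ltn_trans lt_ij (ltnSn j))).
by apply: eq_bigr => i _; rewrite !mxE eqxx.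
Qed.

End UpperBidiagonal.

Section JacobiFactor.
Variables (R : rcfType) (g rho : nat -> R) (k : nat).
Local Notation m := k.+1.
Hypotheses (g_gt0 : forall i, (i < m)%N -> 0 < g i)
           (rho_gt0 : forall i, (i < m)%N -> 0 < rho i).

Let sg i : R := Num.sqrt (g i).
Let sr i : R := Num.sqrt (rho i).

Definition jacobi_factor : 'M[R]_m :=
  upper_bidiag m (fun i => 1 / sg i) (fun i => Num.sqrt (rho i.+1 / rho i / g i)).

Let w i := g i * rho i.

Definition jacobi_fwd_sol i := (-1) ^+ i * sg i * sr i / sr 0.
Definition jacobi_bwd_sol j := (-1) ^+ j * tail_sum w m j / (sr j * sr 0).

Lemma sqrt_g_gt0 i : (i < m)%N -> 0 < sg i.
Proof. by move/g_gt0; rewrite sqrtr_gt0. Qed.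

Lemma sqr_sqrt_g i : (i < m)%N -> g i = sg i ^+ 2.
Proof. by move/g_gt0/ltW/sqr_sqrtr. Qed.

Lemma sqr_sqrt_rho i : (i < m)%N -> rho i = sr i ^+ 2.
Proof. by move/rho_gt0/ltW/sqr_sqrtr. Qed.

Lemma sqrt_rho_gt0 i : (i < m)%N -> 0 < sr i.
Proof. by move/rho_gt0; rewrite sqrtr_gt0. Qed.

Lemma sqrt_rho_ratio i : (i.+1 < m)%N ->
  Num.sqrt (rho i.+1 / rho i / g i) = sr i.+1 / (sr i * sg i).
Proof.
move=> lt_Sim; have lt_im := ltnW lt_Sim.
have gi := ltW (g_gt0 lt_im); have rhoi := ltW (rho_gt0 lt_im).
have rhoSi := ltW (rho_gt0 lt_Sim).
rewrite sqrtrM ?divr_ge0 // sqrtrM // !sqrtrV //.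
by rewrite invfM mulrA.
Qed.

Lemma tr_jacobi_factor_mul_fwd :
  jacobi_factor^T *m \col_(i < m) jacobi_fwd_sol i = delta_mx 0 0.
Proof.
rewrite tr_upper_bidiag_mul_col; apply/colP => i; rewrite !mxE andbT -val_eqE /=.
have r0 := sqrt_rho_gt0 (ltn0Sn k).
rewrite /jacobi_fwd_sol; case: (nat_of_ord i) (ltn_ord i) => [|i'] lt_im /=.
  by have g0 := sqrt_g_gt0 lt_im; field; rewrite ?gt_eqF.
have lt_i'm := ltnW lt_im; have g_i' := sqrt_g_gt0 lt_i'm.
have g_i := sqrt_g_gt0 lt_im; have r_i' := sqrt_rho_gt0 lt_i'm.
by rewrite sqrt_rho_ratio // exprS; field; rewrite ?gt_eqF.
Qed.

Lemma jacobi_factor_mul_bwd :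
  jacobi_factor *m \col_(j < m) jacobi_bwd_sol j = \col_(i < m) jacobi_fwd_sol i.
Proof.
rewrite upper_bidiag_mul_col; apply/colP => i; rewrite !mxE.
have lt_im := ltn_ord i; have g_i := sqrt_g_gt0 lt_im; have r_i := sqrt_rho_gt0 lt_im.
have r0 := sqrt_rho_gt0 (ltn0Sn k).
rewrite /jacobi_bwd_sol /jacobi_fwd_sol tail_sum_recl // /w.
case: ifP => [lt_Sim | /negbT]; last first.
  rewrite -leqNgt => /tail_sum_geq ->.
  by rewrite (sqr_sqrt_g lt_im) (sqr_sqrt_rho lt_im); field; rewrite ?gt_eqF.
have r_Si := sqrt_rho_gt0 lt_Sim.
rewrite sqrt_rho_ratio // (sqr_sqrt_g lt_im) (sqr_sqrt_rho lt_im) [_ ^+ i.+1]exprS.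
by field; rewrite ?gt_eqF.
Qed.

Lemma jacobi_factor_unitmx : jacobi_factor \in unitmx.
Proof.
rewrite unitmxE det_upper_bidiag unitfE; apply/prodf_neq0 => i _.
by rewrite div1r invr_eq0 gt_eqF ?sqrt_g_gt0.
Qed.

Lemma jacobi_inv_sqr_e1 (T := jacobi_factor^T *m jacobi_factor) :
  rho 0 * (invmx T *m invmx T) ord0 ord0 = sq_tail_series w rho m.
Proof.
have T_sym : T^T = T by rewrite /T trmx_mul trmxK.
have T_unit : T \in unitmx by rewrite unitmx_mul unitmx_tr jacobi_factor_unitmx.
have T_bwd : T *m \col_j jacobi_bwd_sol j = delta_mx 0 0.
  by rewrite -mulmxA jacobi_factor_mul_bwd tr_jacobi_factor_mul_fwd.
have Tinv_col0 : col 0 (invmx T) = \col_j jacobi_bwd_sol j by rewrite colE -T_bwd mulKmx.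
rewrite !mxE /sq_tail_series big_mkord mulr_sumr; apply: eq_bigr => l _.
have Tinv_l0 : invmx T l 0 = jacobi_bwd_sol l.
  by have := congr1 (fun v : 'cV_m => v l 0) Tinv_col0; rewrite !mxE.
have -> : invmx T 0 l = (invmx T)^T l 0 by rewrite mxE.
rewrite trmx_inv T_sym.
have lt_lm := ltn_ord l; have r_l := sqrt_rho_gt0 lt_lm.
have r0 := sqrt_rho_gt0 (ltn0Sn k).
rewrite Tinv_l0 -expr2 /jacobi_bwd_sol (sqr_sqrt_rho lt_lm) (sqr_sqrt_rho (ltn0Sn k)).
rewrite !exprMn sqrr_sign.
by field; rewrite ?gt_eqF.
Qed.

End JacobiFactor.

Lemma dotvv_gt0 (R : rcfType) (N : nat) (v : 'cV[R]_N) : v != 0 -> 0 < dotv v v.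
Proof.
have -> : dotv v v = \sum_i v i 0 ^+ 2.
  by rewrite /dotv mxE; apply: eq_bigr => i _; rewrite mxE expr2.
move=> v_neq0; rewrite lt0r sumr_ge0 ?andbT => [|i _]; last exact: sqr_ge0.
apply: contra v_neq0 => /eqP /psumr_eq0P v_eq0; apply/eqP/colP => i; rewrite mxE.
by apply/eqP; rewrite -sqrf_eq0 v_eq0 // => j _; exact: sqr_ge0.
Qed.

Section Krylov.
Variables (R : rcfType) (N : nat) (A : 'M[R]_N) (r_0 : 'cV[R]_N).
Local Notation K := (krylov A r_0).

Definition in_krylov k (v : 'cV[R]_N) := (v^T <= K k)%MS.

Lemma row_krylov k (i : 'I_k) : row i (K k) = (A ^+ i *m r_0)^T.
Proof. exact: rowK. Qed.

Lemma in_krylov0 k : in_krylov k 0.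
Proof. by rewrite /in_krylov trmx0 sub0mx. Qed.

Lemma in_krylovD k u v : in_krylov k u -> in_krylov k v -> in_krylov k (u + v).
Proof. by rewrite /in_krylov linearD; apply: addmx_sub. Qed.

Lemma in_krylovZ k a v : in_krylov k v -> in_krylov k (a *: v).
Proof. by rewrite /in_krylov linearZ; apply: scalemx_sub. Qed.

Lemma in_krylovN k v : in_krylov k v -> in_krylov k (- v).
Proof. by rewrite -scaleN1r; apply: in_krylovZ. Qed.

Lemma in_krylov_pow k i : (i < k)%N -> in_krylov k (A ^+ i *m r_0).
Proof. by move=> lt_ik; rewrite /in_krylov -(row_krylov (Ordinal lt_ik)) row_sub. Qed.

Lemma in_krylovW k l v : (k <= l)%N -> in_krylov k v -> in_krylov l v.
Proof.
move=> le_kl v_in; apply: submx_trans v_in _; apply/row_subP => i.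
by rewrite row_krylov; exact: in_krylov_pow (leq_trans (ltn_ord i) le_kl).
Qed.

Lemma in_krylov_mul k v : in_krylov k v -> in_krylov k.+1 (A *m v).
Proof.
rewrite /in_krylov trmx_mul => /(submxMr A^T) /submx_trans; apply.
apply/row_subP => i; rewrite row_mul row_krylov -trmx_mul.
have -> : A *m (A ^+ i *m r_0) = A ^+ i.+1 *m r_0 by rewrite exprS mulmxA.
by apply: in_krylov_pow; rewrite ltnS.
Qed.

Lemma krylov_succ_sub k : in_krylov k (A ^+ k *m r_0) -> (K k.+1 <= K k)%MS.
Proof.
move=> Akr0_in; apply/row_subP => i; rewrite row_krylov.
have [lt_ik | le_ki] := ltnP i k; first exact: in_krylov_pow.
suff -> : (i : nat) = k by [].
by apply/eqP; rewrite eqn_leq le_ki andbT -ltnS ltn_ord.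
Qed.

Lemma krylov_stagnates k : in_krylov k (A ^+ k *m r_0) ->
  forall i, in_krylov k (A ^+ i *m r_0).
Proof.
move=> Akr0_in; elim=> [|i IHi].
  by case: k Akr0_in => // k _; apply: in_krylov_pow.
rewrite exprS -mulmxA.
exact: submx_trans (in_krylov_mul IHi) (krylov_succ_sub Akr0_in).
Qed.

Lemma krylov_pow_notin n k : is_grade A r_0 n -> (k < n)%N ->
  ~ in_krylov k (A ^+ k *m r_0).
Proof.
move=> [[l rank_l] _] lt_kn /krylov_stagnates Akr0_in.
have sub_lk : (K l <= K k)%MS.
  by apply/row_subP => i; rewrite row_krylov; apply: Akr0_in.
have := leq_trans (mxrankS sub_lk) (rank_leq_row _).
by rewrite rank_l leqNgt lt_kn.
Qed.

End Krylov.

Section ConjugateGradient.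
Variables (R : rcfType) (N : nat) (A : 'M[R]_N) (b x0 : 'cV[R]_N).
Local Notation r := (cg_r A b x0).
Local Notation p := (cg_p A b x0).
Local Notation g := (gamma A b x0).
Local Notation rho k := (dotv (r k) (r k)).
Local Notation r_0 := (r0 A b x0).
Local Notation in_K := (in_krylov A r_0).

Lemma cg_rS k : r k.+1 = r k - g k *: (A *m p k).
Proof. by rewrite /gamma /cg_r /cg_p /=; case: (cg_state A b x0 k) => [[x rk] pk]. Qed.

Lemma cg_pS k : p k.+1 = r k.+1 + delta A b x0 k.+1 *: p k.
Proof.
by rewrite /delta /gamma /cg_r /cg_p /=; case: (cg_state A b x0 k) => [[x rk] pk].
Qed.

Definition cg_lead k : R := \prod_(i < k) (- g i).

Lemma cg_krylov_lead k :
  in_K k (r k - cg_lead k *: (A ^+ k *m r_0)) /\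
  in_K k (p k - cg_lead k *: (A ^+ k *m r_0)).
Proof.
elim: k => [|k [r_lead p_lead]].
  by rewrite /cg_lead big_ord0 scale1r expr0 mul1mx subrr; split; apply: in_krylov0.
set v := A ^+ k *m r_0.
have in_K_succ u : in_K k (u - cg_lead k *: v) -> in_K k.+1 u.
  move=> u_lead; rewrite -(subrK (cg_lead k *: v) u).
  by apply: in_krylovD; [exact: in_krylovW u_lead | apply/in_krylovZ/in_krylov_pow].
have r_lead' : in_K k.+1 (r k.+1 - cg_lead k.+1 *: (A ^+ k.+1 *m r_0)).
  have -> : r k.+1 - cg_lead k.+1 *: (A ^+ k.+1 *m r_0) =
            r k - g k *: (A *m (p k - cg_lead k *: v)).
    rewrite cg_rS /cg_lead big_ord_recr /= exprS -mulmxA -/v mulmxBr -scalemxAr.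
    by rewrite scalerBr scalerA mulrN scaleNr [g k * _]mulrC opprB addrA opprK addrAC.
  apply: in_krylovD; first exact: in_K_succ r_lead.
  by apply/in_krylovN/in_krylovZ/in_krylov_mul.
split=> //; rewrite cg_pS addrAC.
by apply: in_krylovD => //; apply/in_krylovZ/in_K_succ.
Qed.

Variable n : nat.
Hypotheses (A_spd : spd A) (grade_n : is_grade A r_0 n).

Lemma neq0_krylov_lead k (v : 'cV[R]_N) : (k < n)%N -> cg_lead k != 0 ->
  in_K k (v - cg_lead k *: (A ^+ k *m r_0)) -> v != 0.
Proof.
move=> lt_kn lead_neq0 v_lead; apply/negP => /eqP v_eq0.
apply: (krylov_pow_notin grade_n lt_kn).
move: v_lead; rewrite v_eq0 sub0r => /in_krylovN /(in_krylovZ (cg_lead k)^-1).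
by rewrite opprK scalerA mulVf // scale1r.
Qed.

Lemma cg_gt0 k : (k < n)%N -> 0 < g k /\ 0 < rho k.
Proof.
elim/ltn_ind: k => k IHk lt_kn.
have lead_neq0 : cg_lead k != 0.
  apply/prodf_neq0 => i _; rewrite oppr_eq0 gt_eqF //.
  by case: (IHk i (ltn_ord i) (ltn_trans (ltn_ord i) lt_kn)).
have [r_lead p_lead] := cg_krylov_lead k.
have rho_gt0 := dotvv_gt0 (neq0_krylov_lead lt_kn lead_neq0 r_lead).
have pAp_gt0 := A_spd.2 _ (neq0_krylov_lead lt_kn lead_neq0 p_lead).
by split=> //; rewrite /gamma divr_gt0.
Qed.

Lemma inv_prefix_sum_gt0 k : (k < n)%N -> 0 < inv_prefix_sum (fun j => rho j) k.
Proof.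
elim: k => [|k IHk] lt_kn.
  by rewrite /inv_prefix_sum big_nat1 invr_gt0; case: (cg_gt0 lt_kn).
rewrite inv_prefix_sumS addr_gt0 ?(IHk (ltnW lt_kn)) // invr_gt0.
by case: (cg_gt0 lt_kn).
Qed.

Lemma phiE k : (k < n)%N -> phi A b x0 k = (rho k * inv_prefix_sum (fun j => rho j) k)^-1.
Proof.
elim: k => [|k IHk] lt_kn.
  have [_ rho0_gt0] := cg_gt0 lt_kn.
  by rewrite /= /inv_prefix_sum big_nat1 divff ?gt_eqF // invr1.
have lt_kn' := ltnW lt_kn.
have Q_gt0 := inv_prefix_sum_gt0 lt_kn'.
have [[_ rho_k] [_ rho_Sk]] := (cg_gt0 lt_kn', cg_gt0 lt_kn).
rewrite /= IHk // /delta /= inv_prefix_sumS; clear IHk.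
move: (inv_prefix_sum _ k) Q_gt0 => Q Q_gt0.
by field; rewrite !gt_eqF // addr_gt0 // mulr_gt0.
Qed.

Lemma vartheta_tail_series k : (k <= n)%N ->
  vartheta A b x0 k = tail_series (psi A b x0) (fun j => rho j) k.
Proof.
elim: k => [|k IHk] lt_kn; first by rewrite /tail_series big_geq.
by rewrite /= IHk ?(ltnW lt_kn) // tail_seriesS (phiE lt_kn) invrK /psi mulrA.
Qed.

End ConjugateGradient.

Theorem lemma1 (R : rcfType) (N : nat) (A : 'M[R]_N) (b x0 : 'cV[R]_N) (n : nat) :
  spd A ->
  r0 A b x0 != 0 ->
  is_grade A (r0 A b x0) n ->
  (forall k, (k <= n)%N ->
     xi A b x0 k =
     \sum_(0 <= j < k)
        (dotv (cg_r A b x0 j) (cg_r A b x0 j))^-1 *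
        (\sum_(j <= i < k) psi A b x0 i) ^+ 2) /\
  (forall k, (k.+1 <= n)%N ->
     xi A b x0 k.+1 =
     xi A b x0 k + psi A b x0 k * (vartheta A b x0 k.+1 + vartheta A b x0 k)).
Proof.
(* r_0 != 0 only excludes the grade n = 0, where there is nothing to prove. *)
move=> A_spd _ grade_n.
pose rho j := dotv (cg_r A b x0 j) (cg_r A b x0 j).
have xiE k : (k <= n)%N -> xi A b x0 k = sq_tail_series (psi A b x0) rho k.
  case: k => [|k] le_kn; first by rewrite /sq_tail_series big_geq.
  have cg_gt0_k i : (i < k.+1)%N -> 0 < gamma A b x0 i /\ 0 < rho i.
    by move=> lt_ik; apply: (cg_gt0 A_spd grade_n); exact: leq_trans lt_ik le_kn.
  exact: (jacobi_inv_sqr_e1 (fun i lt_ik => (cg_gt0_k i lt_ik).1)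
                            (fun i lt_ik => (cg_gt0_k i lt_ik).2)).
split=> [k /xiE // | k lt_kn].
rewrite !xiE ?(ltnW lt_kn) // sq_tail_seriesS.
by rewrite !(vartheta_tail_series A_spd grade_n) ?(ltnW lt_kn).
Qed.
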